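(* Let $g(x)=1-(1-x^2)^4$ for $|x|\le1$ and $g(x)=1$ otherwise. Fix $0<p_o<\widetilde{p_o}<2$ and let $(q,p)$, respectively $(\widetilde q,\widetilde p)$, be the global solutions of $\dot q=p$, $\dot p=-g'(q)$ with initial data $(0,p_o)$, respectively $(0,\widetilde{p_o})$. Then: (i) if $p_o\in]0,\sqrt2[$, then $q(t)<\widetilde q(t)$ for all $t\in]0,\mathcal{T}(p_o)/2]$; (ii) if $p_o\in[\sqrt2,2[$, then $q(t)<\widetilde q(t)$ for all $t\in]0,+\infty[$.
   Context: For $p_o\in]0,\sqrt2[$, the solution $q$ of $\dot q=p$, $\dot p=-g'(q)$ with $(q(0),p(0))=(0,p_o)$ is periodic, and $\mathcal{T}(p_o)$ denotes its smallest period. *)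

From Stdlib Require Import Reals.
From Coquelicot Require Import Coquelicot.
Open Scope R_scope.

Definition g (x : R) : R :=
  if Rle_dec (Rabs x) 1 then 1 - (1 - x ^ 2) ^ 4 else 1.

Definition is_global_solution (q p : R -> R) (p0 : R) : Prop :=
  q 0 = 0 /\ p 0 = p0 /\
  forall t : R, is_derive q t (p t) /\ is_derive p t (- Derive g (q t)).

Definition min_period (f : R -> R) : R :=
  real (Glb_Rbar (fun T => 0 < T /\ forall t, f (t + T) = f t)).

From Stdlib Require Import Reals Lra Psatz Classical.
From Coquelicot Require Import Coquelicot.
Open Scope R_scope.

(* Both solutions conserve the energy [p^2 + 2 g(q)].  While the faster solution
   moves forward it cannot be caught: at a first meeting point the potentials agree,
   so it has strictly more kinetic energy and hence the larger velocity.  Above the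
   separatrix (energy at least 2) it never stops, which gives (ii) and the case
   [pto >= sqrt 2] of (i).  Below the separatrix both solutions oscillate inside the
   well [|q| < 1], symmetrically about their first turning times [Q] and [Qt], and
   the quarter period grows with the amplitude, [Q < Qt]: measured in units of its
   own amplitude, the solution of larger amplitude is slower at every common
   normalised position, because [a |-> ((1 - a V)^4 - (1 - a)^4) / a] is decreasing.
   So [q < qt] up to [Qt], and on [[Qt, 2Q]] the reflection [q (2Q - t) = q t] brings
   us back before [Q]. *)

(** * Calculus on the real line *)

Lemma is_derive_continuity_pt (F : R -> R) (x l : R) :
  is_derive F x l -> continuity_pt F x.
Proof.
intros HD. apply is_derive_Reals in HD. apply derivable_continuous_pt. now exists l.
Qed.

Lemma continuity_pt_pos_near (F : R -> R) (x : R) :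
  continuity_pt F x -> 0 < F x ->
  exists d, 0 < d /\ forall s, Rabs (s - x) < d -> 0 < F s.
Proof.
intros HC HF. destruct (HC (F x) HF) as [d [Hd Hnear]].
exists d; split; [exact Hd|]. intros s Hs.
destruct (Req_dec x s) as [<-|Hne]; [exact HF|].
assert (Hclose : Rabs (F s - F x) < F x) by (apply Hnear; repeat split; auto).
apply Rabs_def2 in Hclose. lra.
Qed.

Lemma le_of_derive_nonneg (F F' : R -> R) (a b : R) :
  a <= b -> (forall x, is_derive F x (F' x)) ->
  (forall x, a <= x <= b -> 0 <= F' x) -> F a <= F b.
Proof.
intros Hab HD Hpos.
destruct (MVT_gen F a b F') as [c [Hc Hmvt]];
  [intros; apply HD | intros; eapply is_derive_continuity_pt, HD |].
rewrite Rmin_left, Rmax_right in Hc by lra.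
assert (0 <= F' c) by (apply Hpos; lra). nra.
Qed.

Lemma lt_of_derive_pos (F F' : R -> R) (a b : R) :
  a < b -> (forall x, is_derive F x (F' x)) ->
  (forall x, a <= x <= b -> 0 <= F' x) -> (forall x, a <= x < b -> 0 < F' x) ->
  F a < F b.
Proof.
intros Hab HD Hnn Hpos. set (m := (a + b) / 2).
assert (Hmb : F m <= F b) by (apply (le_of_derive_nonneg F F'); auto; unfold m in *;
  [lra | intros; apply Hnn; lra]).
destruct (MVT_gen F a m F') as [c [Hc Hmvt]];
  [intros; apply HD | intros; eapply is_derive_continuity_pt, HD |].
unfold m in *. rewrite Rmin_left, Rmax_right in Hc by lra.
assert (0 < F' c) by (apply Hpos; lra). nra.
Qed.

Lemma eq_of_derive_zero (F : R -> R) :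
  (forall x, is_derive F x 0) -> forall s t, F s = F t.
Proof.
intros HD s t.
destruct (MVT_gen F s t (fun _ => 0)) as [c [_ Hmvt]];
  [intros; apply HD | intros; eapply is_derive_continuity_pt, HD | lra].
Qed.

Lemma derive_sign_near (F : R -> R) (t l : R) :
  is_derive F t l -> l <> 0 ->
  exists d, 0 < d /\ forall s, s <> t -> Rabs (s - t) < d -> 0 < l * ((F s - F t) * (s - t)).
Proof.
intros HD Hl. apply is_derive_Reals in HD.
destruct (HD (Rabs l) (Rabs_pos_lt l Hl)) as [d Hd].
exists d; split; [apply cond_pos|]. intros s Hne Hs.
specialize (Hd (s - t) ltac:(lra) Hs). replace (t + (s - t)) with s in Hd by ring.
set (r := (F s - F t) / (s - t)) in Hd.
assert (Hr : F s - F t = r * (s - t)) by (unfold r; field; lra).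
assert (Hrl : 0 < l * r) by (destruct (Rabs_def2 _ _ Hd); destruct (Rle_lt_dec 0 l);
  [rewrite Rabs_right in * by lra | rewrite Rabs_left in * by lra]; nra).
rewrite Hr. assert (0 < (s - t) * (s - t)) by (apply Rsqr_pos_lt; lra). nra.
Qed.

Lemma first_root (D : R -> R) (b : R) :
  (forall x, continuity_pt D x) -> 0 < b -> D b <= 0 ->
  (exists d, 0 < d /\ forall s, 0 < s < d -> 0 < D s) ->
  exists c, 0 < c <= b /\ D c = 0 /\ forall s, 0 < s < c -> 0 < D s.
Proof.
intros HC Hb HDb [d [Hd Hstart]].
set (E := fun s => 0 <= s <= b /\ forall u, 0 < u <= s -> 0 < D u).
destruct (completeness E) as [c [Hub Hlub]].
{ exists b. intros s [Hs _]. lra. }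
{ exists 0. split; [lra | intros; lra]. }
assert (Hcb : c <= b) by (apply Hlub; intros s [Hs _]; lra).
assert (Hc0 : 0 < c).
{ apply Rlt_le_trans with (Rmin (d / 2) b); [apply Rmin_glb_lt; lra|].
  apply Hub. split; [split; [apply Rmin_glb|apply Rmin_r]; lra|].
  intros u Hu. apply Hstart. split; [lra|]. apply Rle_lt_trans with (d / 2); [|lra].
  apply Rle_trans with (Rmin (d / 2) b); [lra | apply Rmin_l]. }
assert (Hbelow : forall s, 0 < s < c -> 0 < D s).
{ intros s Hs. destruct (Rlt_le_dec 0 (D s)) as [|Hns]; [assumption|]. exfalso.
  assert (c <= s); [|lra]. apply Hlub. intros e [_ He].
  destruct (Rle_lt_dec e s) as [|Hse]; [assumption|].
  assert (0 < D s) by (apply He; lra). lra. }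
exists c. split; [lra|]. split; [|exact Hbelow].
destruct (Rtotal_order (D c) 0) as [Hneg|[Hz|Hpos]]; [exfalso| exact Hz| exfalso].
- destruct (continuity_pt_pos_near (fun x => - D x) c) as [e [He Hnear]];
    [apply continuity_pt_opp, HC | lra |].
  set (s := Rmax (c / 2) (c - e / 2)).
  assert (Hs : c / 2 <= s /\ c - e / 2 <= s) by (split; [apply Rmax_l | apply Rmax_r]).
  assert (s < c) by (apply Rmax_lub_lt; lra).
  assert (0 < D s) by (apply Hbelow; lra).
  assert (0 < - D s) by (apply Hnear; rewrite Rabs_left; lra). lra.
- destruct (continuity_pt_pos_near D c) as [e [He Hnear]]; [apply HC | lra |].
  assert (c < b) by (destruct (Req_dec c b) as [->|]; lra).
  set (c' := Rmin b (c + e / 2)).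
  assert (Hc' : c' <= b /\ c' <= c + e / 2) by (split; [apply Rmin_l | apply Rmin_r]).
  assert (c < c') by (apply Rmin_glb_lt; lra).
  assert (c' <= c); [|lra].
  apply Hub. split; [lra|]. intros u Hu.
  destruct (Rlt_le_dec u c); [apply Hbelow; lra|].
  apply Hnear. rewrite Rabs_right; lra.
Qed.

Lemma derive_nonpos_at_first_root (D : R -> R) (c l : R) :
  is_derive D c l -> 0 < c -> D c = 0 -> (forall s, 0 < s < c -> 0 < D s) -> l <= 0.
Proof.
intros HD Hc HDc Hbelow. destruct (Rle_lt_dec l 0) as [|Hl]; [assumption|]. exfalso.
destruct (derive_sign_near D c l HD ltac:(lra)) as [d [Hd Hsign]].
set (s := Rmax (c / 2) (c - d / 2)).
assert (Hs : c / 2 <= s /\ c - d / 2 <= s) by (split; [apply Rmax_l | apply Rmax_r]).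
assert (s < c) by (apply Rmax_lub_lt; lra).
specialize (Hsign s ltac:(lra) ltac:(rewrite Rabs_left; lra)).
specialize (Hbelow s ltac:(lra)). rewrite HDc in Hsign.
assert (0 < D s * (c - s)) by (apply Rmult_lt_0_compat; lra). nra.
Qed.

Lemma derive2_nonneg_at_first_root (D D' : R -> R) (c l : R) :
  (forall s, is_derive D s (D' s)) -> is_derive D' c l -> 0 < c -> D c = 0 -> D' c = 0 ->
  (forall s, 0 < s < c -> 0 < D s) -> 0 <= l.
Proof.
intros HD HD' Hc HDc HD'c Hbelow. destruct (Rle_lt_dec 0 l) as [|Hl]; [assumption|]. exfalso.
destruct (derive_sign_near D' c l HD' ltac:(lra)) as [d [Hd Hsign]].
set (s := Rmax (c / 2) (c - d / 2)).
assert (Hs : c / 2 <= s /\ c - d / 2 <= s) by (split; [apply Rmax_l | apply Rmax_r]).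
assert (s < c) by (apply Rmax_lub_lt; lra).
assert (D s <= D c).
{ apply (le_of_derive_nonneg D D' s c ltac:(lra) HD). intros x Hx.
  destruct (Req_dec x c) as [->|Hxc]; [lra|].
  specialize (Hsign x Hxc ltac:(rewrite Rabs_left; lra)). rewrite HD'c in Hsign.
  replace (l * ((D' x - 0) * (x - c))) with (D' x * (- l * (c - x))) in Hsign by ring.
  assert (0 < - l * (c - x)) by (apply Rmult_lt_0_compat; lra). nra. }
specialize (Hbelow s ltac:(lra)). lra.
Qed.

Lemma Gronwall_zero (u u' : R -> R) (K t0 : R) :
  (forall t, is_derive u t (u' t)) -> (forall t, 0 <= u t) ->
  (forall t, Rabs (u' t) <= K * u t) -> u t0 = 0 -> forall t, u t = 0.
Proof.
intros Hu Hnn Hbound H0 t.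
set (w' := fun k s => u' s * exp (k * s) + u s * (k * exp (k * s))).
assert (Hweight : forall k s, is_derive (fun x => u x * exp (k * x)) s (w' k s)).
{ intros k s. apply (Derive.is_derive_mult u (fun x => exp (k * x))); [apply Hu|].
  auto_derive; [exact I | ring]. }
assert (Hexp : forall k, 0 < exp (k * t)) by (intros; apply exp_pos).
destruct (Rle_lt_dec t0 t) as [Ht|Ht].
- assert (Hmono : - (u t0 * exp (- K * t0)) <= - (u t * exp (- K * t))).
  { apply (le_of_derive_nonneg (fun x => - (u x * exp (- K * x))) (fun s => - w' (- K) s)
             t0 t Ht).
    - intros s. apply (is_derive_opp (fun x => u x * exp (- K * x))), Hweight.
    - intros s _. specialize (Hbound s). apply Rabs_le_between in Hbound.
      assert (0 < exp (- K * s)) by apply exp_pos. unfold w'. nra. }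
  rewrite H0 in Hmono. specialize (Hnn t). specialize (Hexp (- K)). nra.
- assert (Hmono : u t * exp (K * t) <= u t0 * exp (K * t0)).
  { apply (le_of_derive_nonneg (fun x => u x * exp (K * x)) (w' K) t t0 ltac:(lra)
             (Hweight K)).
    intros s _. specialize (Hbound s). apply Rabs_le_between in Hbound.
    assert (0 < exp (K * s)) by apply exp_pos. unfold w'. nra. }
  rewrite H0 in Hmono. specialize (Hnn t). specialize (Hexp K). nra.
Qed.

Lemma pow_lt_compat_nonneg (x y : R) (n : nat) :
  0 <= x < y -> (0 < n)%nat -> x ^ n < y ^ n.
Proof.
intros Hxy Hn. induction n as [|n IH]; [lia|].
destruct (Nat.eq_dec n 0) as [->|Hn0]; [simpl; lra|].
assert (x ^ n < y ^ n) by (apply IH; lia).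
assert (0 <= x ^ n) by (apply pow_le; lra).
simpl. nra.
Qed.

Lemma pow_le_inv_nonneg (x y : R) (n : nat) :
  0 <= y -> (0 < n)%nat -> x ^ n <= y ^ n -> x <= y.
Proof.
intros Hy Hn Hle. destruct (Rle_lt_dec x y) as [|Hyx]; [assumption|].
assert (y ^ n < x ^ n) by (apply pow_lt_compat_nonneg; auto). lra.
Qed.

Lemma pow_lt_inv_nonneg (x y : R) (n : nat) :
  0 <= y -> x ^ n < y ^ n -> x < y.
Proof.
intros Hy Hlt. destruct (Rlt_le_dec x y) as [|Hyx]; [assumption|].
assert (y ^ n <= x ^ n) by (apply pow_incr; lra). lra.
Qed.

Lemma Rabs_cross_le (a b c L : R) :
  0 <= L -> Rabs c <= L * Rabs a -> Rabs (2 * a * b - 2 * b * c) <= (1 + L) * (a * a + b * b).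
Proof.
intros HL Hc.
replace (2 * a * b - 2 * b * c) with (2 * b * (a - c)) by ring.
rewrite !Rabs_mult, (Rabs_right 2) by lra.
pose proof (Rabs_triang a (- c)) as Htri. rewrite Rabs_Ropp in Htri.
replace (a * a + b * b) with (Rabs a * Rabs a + Rabs b * Rabs b)
  by (rewrite <- !Rabs_mult; rewrite !Rabs_right by (apply Rle_ge, Rle_0_sqr); ring).
pose proof (Rabs_pos a). pose proof (Rabs_pos b).
assert (Rabs (a - c) <= (1 + L) * Rabs a) by (unfold Rminus; lra).
assert (2 * Rabs b * Rabs (a - c) <= (1 + L) * (2 * Rabs a * Rabs b)) by nra.
assert (2 * Rabs a * Rabs b <= Rabs a * Rabs a + Rabs b * Rabs b)
  by (pose proof (Rle_0_sqr (Rabs a - Rabs b)); unfold Rsqr in *; lra).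
apply Rle_trans with ((1 + L) * (2 * Rabs a * Rabs b)); [lra|].
apply Rmult_le_compat_l; lra.
Qed.

(** * Conservative oscillators *)

Section ConservativeOscillator.

Variables (V f : R -> R).

Definition solves (q p : R -> R) : Prop :=
  forall t, is_derive q t (p t) /\ is_derive p t (- f (q t)).

Lemma solves_continuity_pt (q p : R -> R) :
  solves q p -> forall t, continuity_pt q t /\ continuity_pt p t.
Proof.
intros Hsol t. destruct (Hsol t) as [Hq Hp].
split; eapply is_derive_continuity_pt; eassumption.
Qed.

Lemma solves_time_reversal (q p : R -> R) (a : R) :
  solves q p -> solves (fun t => q (a - t)) (fun t => - p (a - t)).
Proof.
intros Hsol t. destruct (Hsol (a - t)) as [Hq Hp].
assert (Hr : is_derive (fun s => a - s) t (-1)) by (auto_derive; [exact I | ring]).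
split.
- replace (- p (a - t)) with (-1 * p (a - t)) by ring.
  exact (is_derive_comp q _ t _ _ Hq Hr).
- replace (- f (q (a - t))) with (- (-1 * - f (q (a - t)))) by ring.
  apply (is_derive_opp (fun s => p (a - s))).
  exact (is_derive_comp p _ t _ _ Hp Hr).
Qed.

Hypothesis V_derive : forall x, is_derive V x (f x).

Lemma energy_conserved (q p : R -> R) :
  solves q p -> forall s t, p s ^ 2 + 2 * V (q s) = p t ^ 2 + 2 * V (q t).
Proof.
intros Hsol. apply (eq_of_derive_zero (fun t => p t ^ 2 + 2 * V (q t))). intros x.
destruct (Hsol x) as [Hq Hp].
replace 0 with (INR 2 * - f (q x) * p x ^ 1 + 2 * (p x * f (q x))) by (simpl; ring).
apply (is_derive_plus (fun t => p t ^ 2)).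
- exact (is_derive_pow p 2 x _ Hp).
- apply is_derive_scal. exact (is_derive_comp V q x _ _ (V_derive (q x)) Hq).
Qed.

Lemma faster_stays_ahead (q p qt pt : R -> R) (b : R) :
  solves q p -> solves qt pt -> q 0 = qt 0 -> Rabs (p 0) < pt 0 ->
  (forall t, 0 <= t <= b -> 0 <= pt t) -> forall t, 0 < t <= b -> q t < qt t.
Proof.
intros Hsol Hsolt H0 Hfaster Hnonneg t Ht.
destruct (Rlt_le_dec (q t) (qt t)) as [|Hbehind]; [assumption|]. exfalso.
set (D := fun s => qt s - q s).
assert (HD : forall s, is_derive D s (pt s - p s))
  by (intros s; apply (is_derive_minus qt q); [apply Hsolt | apply Hsol]).
assert (HD0 : D 0 = 0) by (unfold D; rewrite H0; ring).
assert (Hp0 : p 0 < pt 0) by (pose proof (Rle_abs (p 0)); lra).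
assert (Hstart : exists d, 0 < d /\ forall s, 0 < s < d -> 0 < D s).
{ destruct (derive_sign_near D 0 _ (HD 0) ltac:(lra)) as [d [Hd Hsign]].
  exists d. split; [exact Hd|]. intros s Hs.
  specialize (Hsign s ltac:(lra) ltac:(rewrite Rabs_right; lra)).
  rewrite HD0, !Rminus_0_r in Hsign.
  assert (0 < (pt 0 - p 0) * s) by (apply Rmult_lt_0_compat; lra). nra. }
destruct (first_root D t) as [c [Hc [HDc Hbelow]]];
  [intros; eapply is_derive_continuity_pt, HD | lra | unfold D; lra | exact Hstart |].
assert (Hslower := derive_nonpos_at_first_root D c _ (HD c) ltac:(lra) HDc Hbelow).
assert (Hmeet : qt c = q c) by (unfold D in HDc; lra).
pose proof (energy_conserved q p Hsol c 0) as E.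
pose proof (energy_conserved qt pt Hsolt c 0) as Et.
rewrite Hmeet, <- H0 in Et.
assert (p 0 ^ 2 < pt 0 ^ 2).
{ rewrite <- (pow2_abs (p 0)).
  apply pow_lt_compat_nonneg; [split; [apply Rabs_pos | exact Hfaster] | lia]. }
assert (0 <= pt c) by (apply Hnonneg; lra).
nra.
Qed.

Variable L : R.
Hypothesis f_lipschitz : forall x y, Rabs (f x - f y) <= L * Rabs (x - y).

Lemma solves_unique (q1 p1 q2 p2 : R -> R) (t0 : R) :
  solves q1 p1 -> solves q2 p2 -> q1 t0 = q2 t0 -> p1 t0 = p2 t0 ->
  forall t, q1 t = q2 t /\ p1 t = p2 t.
Proof.
intros Hsol1 Hsol2 Hq0 Hp0.
set (a := fun t => q1 t - q2 t). set (b := fun t => p1 t - p2 t).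
set (c := fun t => f (q1 t) - f (q2 t)).
assert (HL : 0 <= L).
{ specialize (f_lipschitz 1 0). rewrite Rminus_0_r, Rabs_R1 in f_lipschitz.
  pose proof (Rabs_pos (f 1 - f 0)). lra. }
assert (Hzero := Gronwall_zero (fun t => a t * a t + b t * b t)
                   (fun t => 2 * a t * b t - 2 * b t * c t) (1 + L) t0).
assert (Hab : forall t, a t * a t + b t * b t = 0).
{ apply Hzero.
  - intros t. destruct (Hsol1 t) as [Hq1 Hp1]. destruct (Hsol2 t) as [Hq2 Hp2].
    assert (Ha : is_derive a t (b t)) by exact (is_derive_minus q1 q2 t _ _ Hq1 Hq2).
    assert (Hb : is_derive b t (- c t)).
    { replace (- c t) with (- f (q1 t) - - f (q2 t)) by (unfold c; ring).
      exact (is_derive_minus p1 p2 t _ _ Hp1 Hp2). }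
    replace (2 * a t * b t - 2 * b t * c t)
      with (b t * a t + a t * b t + (- c t * b t + b t * - c t)) by ring.
    apply (is_derive_plus (fun t => a t * a t)); apply Derive.is_derive_mult; assumption.
  - intros t. pose proof (Rle_0_sqr (a t)). pose proof (Rle_0_sqr (b t)). unfold Rsqr in *. lra.
  - intros t. apply Rabs_cross_le; [exact HL | apply f_lipschitz].
  - unfold a, b. rewrite Hq0, Hp0. ring. }
intros t. destruct (Rplus_sqr_eq_0 (a t) (b t) (Hab t)) as [Ha Hb].
unfold a, b in Ha, Hb. lra.
Qed.

Lemma solution_reflection (q p : R -> R) (Q : R) :
  solves q p -> p Q = 0 -> forall t, q (2 * Q - t) = q t.
Proof.
intros Hsol HQ t.
assert (Hrev := solves_time_reversal q p (2 * Q) Hsol).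
replace (2 * Q - Q) with Q in Hrev by ring.
refine (proj1 (solves_unique _ _ _ _ Q Hrev Hsol _ _ t)); simpl;
  replace (2 * Q - Q) with Q by ring; [reflexivity | rewrite HQ; ring].
Qed.

Hypothesis f_odd : forall x, f (- x) = - f x.

Lemma solves_opp (q p : R -> R) :
  solves q p -> solves (fun t => - q t) (fun t => - p t).
Proof.
intros Hsol t. destruct (Hsol t) as [Hq Hp]. split.
- exact (is_derive_opp q t _ Hq).
- rewrite f_odd. exact (is_derive_opp p t _ Hp).
Qed.

Lemma solution_odd (q p : R -> R) :
  solves q p -> q 0 = 0 -> forall t, q (- t) = - q t.
Proof.
intros Hsol H0 t.
assert (Hsym := solves_opp _ _ (solves_time_reversal q p 0 Hsol)).
rewrite <- (proj1 (solves_unique _ _ _ _ 0 Hsym Hsol ltac:(simpl; rewrite Rminus_0_r, H0; ring)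
                     ltac:(simpl; rewrite Rminus_0_r; ring) t)).
simpl. rewrite Rminus_0_l. ring.
Qed.

Lemma solution_periodic (q p : R -> R) (Q : R) :
  solves q p -> q 0 = 0 -> p Q = 0 -> forall t, q (t + 4 * Q) = q t.
Proof.
intros Hsol H0 HQ t.
rewrite <- (solution_reflection q p Q Hsol HQ).
replace (2 * Q - (t + 4 * Q)) with (- (t + 2 * Q)) by ring.
rewrite (solution_odd q p Hsol H0), <- (solution_reflection q p Q Hsol HQ).
replace (2 * Q - (t + 2 * Q)) with (- t) by ring.
rewrite (solution_odd q p Hsol H0). ring.
Qed.

End ConservativeOscillator.

(** * The potential g *)

Lemma is_derive_Rmax0_pow (n : nat) (u : R) :
  is_derive (fun v => Rmax 0 v ^ S (S n)) u (INR (S (S n)) * Rmax 0 u ^ S n).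
Proof.
destruct (Rtotal_order u 0) as [Hu|[->|Hu]].
- rewrite Rmax_left, pow_i, Rmult_0_r by (lra || lia).
  apply (is_derive_ext_loc (fun _ => 0)); [|auto_derive; [exact I | ring]].
  apply locally_interval with m_infty 0; [exact I | exact Hu |].
  intros y _ Hy. simpl in Hy. rewrite Rmax_left, pow_i by (lra || lia). reflexivity.
- rewrite Rmax_left, pow_i, Rmult_0_r by (lra || lia).
  apply is_derive_Reals. intros eps Heps.
  assert (Hdelta : 0 < Rmin 1 eps) by (apply Rmin_glb_lt; lra).
  exists (mkposreal _ Hdelta). intros h Hh0 Hh. simpl in Hh.
  assert (Hh1 : Rabs h < 1) by (eapply Rlt_le_trans; [exact Hh | apply Rmin_l]).
  assert (Hheps : Rabs h < eps) by (eapply Rlt_le_trans; [exact Hh | apply Rmin_r]).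
  rewrite Rplus_0_l, (Rmax_left 0 0), pow_i, !Rminus_0_r by (lra || lia).
  destruct (Rle_lt_dec h 0) as [Hneg|Hpos].
  + rewrite Rmax_left, pow_i by (lra || lia). unfold Rdiv. rewrite Rmult_0_l, Rabs_R0. lra.
  + rewrite Rmax_right by lra.
    replace (h ^ S (S n) / h) with (h * h ^ n) by (simpl; field; lra).
    rewrite Rabs_mult, <- RPow_abs.
    assert (Rabs h ^ n <= 1)
      by (rewrite <- (pow1 n); apply pow_incr; split; [apply Rabs_pos | lra]).
    pose proof (Rabs_pos h). nra.
- rewrite Rmax_right by lra.
  apply (is_derive_ext_loc (fun v => v ^ S (S n))).
  + apply locally_interval with 0 p_infty; [exact Hu | exact I |].
    intros y Hy _. simpl in Hy. rewrite Rmax_right by lra. reflexivity.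
  + apply (is_derive_ext (fun v => v ^ S (S n))); [reflexivity|].
    rewrite <- (Rmult_1_r (INR (S (S n)))) at 1.
    exact (is_derive_pow (fun v => v) (S (S n)) u 1 (is_derive_id u)).
Qed.

Definition bump (x : R) : R := Rmax 0 (1 - x ^ 2).

Definition force (x : R) : R := 8 * x * bump x ^ 3.

Lemma bump_bounds (x : R) : 0 <= bump x <= 1.
Proof. unfold bump. split; [apply Rmax_l | apply Rmax_lub; nra]. Qed.

Lemma bump_in (x : R) : x ^ 2 <= 1 -> bump x = 1 - x ^ 2.
Proof. intros Hx. unfold bump. rewrite Rmax_right; lra. Qed.

Lemma bump_out (x : R) : 1 <= x ^ 2 -> bump x = 0.
Proof. intros Hx. unfold bump. rewrite Rmax_left; lra. Qed.

Lemma bump_pos (x : R) : 0 < bump x -> x ^ 2 < 1.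
Proof.
intros Hb. destruct (Rlt_le_dec (x ^ 2) 1) as [|Hx]; [assumption|].
rewrite bump_out in Hb by exact Hx. lra.
Qed.

Lemma g_bump (x : R) : g x = 1 - bump x ^ 4.
Proof.
unfold g. pose proof (pow2_abs x). pose proof (Rabs_pos x).
destruct (Rle_dec (Rabs x) 1) as [Hx|Hx].
- rewrite bump_in by nra. reflexivity.
- rewrite bump_out by nra. simpl. ring.
Qed.

Lemma g_0 : g 0 = 0.
Proof. rewrite g_bump, bump_in by (simpl; lra). simpl. ring. Qed.

Lemma g_nonneg (x : R) : 0 <= g x.
Proof.
rewrite g_bump. destruct (bump_bounds x).
assert (bump x ^ 4 <= 1 ^ 4) by (apply pow_incr; lra). simpl in *. lra.
Qed.

Lemma is_derive_bump_pow (n : nat) (x : R) :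
  is_derive (fun y => bump y ^ S (S n)) x (- 2 * x * (INR (S (S n)) * bump x ^ S n)).
Proof.
apply (is_derive_comp (fun v => Rmax 0 v ^ S (S n)) (fun y => 1 - y ^ 2)).
- apply is_derive_Rmax0_pow.
- auto_derive; [exact I | ring].
Qed.

Lemma is_derive_g (x : R) : is_derive g x (force x).
Proof.
apply (is_derive_ext (fun y => 1 - bump y ^ 4)); [intros; symmetry; apply g_bump|].
replace (force x) with (0 - - 2 * x * (INR 4 * bump x ^ 3))
  by (unfold force; simpl; ring).
apply (is_derive_minus (fun _ => 1)); [exact (is_derive_const 1 x) | apply (is_derive_bump_pow 2)].
Qed.

Lemma Derive_g (x : R) : Derive g x = force x.
Proof. apply is_derive_unique, is_derive_g. Qed.

Definition force_deriv (x : R) : R := 8 * bump x ^ 3 - 48 * x ^ 2 * bump x ^ 2.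

Lemma is_derive_force (x : R) : is_derive force x (force_deriv x).
Proof.
replace (force_deriv x) with (8 * bump x ^ 3 + 8 * x * (- 2 * x * (INR 3 * bump x ^ 2)))
  by (unfold force_deriv; simpl; ring).
apply (Derive.is_derive_mult (fun y => 8 * y) (fun y => bump y ^ 3)).
- auto_derive; [exact I | ring].
- apply (is_derive_bump_pow 1).
Qed.

Lemma force_deriv_bound (x : R) : Rabs (force_deriv x) <= 56.
Proof.
destruct (bump_bounds x) as [Hb0 Hb1].
assert (Hx2 : 0 <= x ^ 2) by apply pow2_ge_0.
assert (Hxb : x ^ 2 * bump x <= 1).
{ destruct (Rle_lt_dec (x ^ 2) 1) as [Hx|Hx].
  - rewrite bump_in by exact Hx. nra.
  - rewrite bump_out by lra. lra. }
assert (0 <= bump x ^ 2 <= 1) by (simpl; split; nra).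
assert (0 <= bump x ^ 3 <= 1) by (simpl; split; nra).
assert (0 <= x ^ 2 * bump x ^ 2 <= 1) by (simpl in *; split; nra).
unfold force_deriv. apply Rabs_le. lra.
Qed.

Lemma force_lipschitz (x y : R) : Rabs (force x - force y) <= 56 * Rabs (x - y).
Proof.
apply (bounded_variation force force_deriv 56 y x).
intros t _. split; [apply is_derive_force | apply force_deriv_bound].
Qed.

Lemma force_odd (x : R) : force (- x) = - force x.
Proof. unfold force, bump. replace ((- x) ^ 2) with (x ^ 2) by ring. ring. Qed.

Lemma global_solution_solves (q p : R -> R) (p0 : R) :
  is_global_solution q p p0 -> solves force q p.
Proof.
intros [_ [_ Hder]] t. rewrite <- Derive_g. apply Hder.
Qed.

Lemma global_solution_energy (q p : R -> R) (p0 : R) :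
  is_global_solution q p p0 -> forall t, p t ^ 2 + 2 * g (q t) = p0 ^ 2.
Proof.
intros Hsol t. pose proof Hsol as [H0 [Hp0 _]].
rewrite (energy_conserved g force is_derive_g q p (global_solution_solves _ _ _ Hsol) t 0).
rewrite H0, Hp0, g_0. ring.
Qed.

(** * Motion above the separatrix *)

Lemma velocity_pos_above_separatrix (q p : R -> R) (po : R) :
  is_global_solution q p po -> 0 < po -> 2 <= po ^ 2 -> forall t, 0 <= t -> 0 < p t.
Proof.
intros Hsol Hpo Hpo2. pose proof Hsol as [H0 [Hp0 _]].
assert (Hsolves := global_solution_solves _ _ _ Hsol).
(* At energy exactly 2 the solution could only stop at an equilibrium [|q| >= 1],
   and the solution through [0] is not that constant solution. *)
assert (Hmoving : forall c, p c <> 0).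
{ intros c Hc.
  pose proof (global_solution_energy _ _ _ Hsol c) as E. rewrite Hc, g_bump in E.
  assert (Hrest : bump (q c) = 0).
  { destruct (bump_bounds (q c)). apply Rle_antisym; [|assumption].
    apply (pow_le_inv_nonneg _ 0 4); [lra | lia | simpl in *; lra]. }
  assert (Hconst : solves force (fun _ => q c) (fun _ => 0)).
  { intros t. unfold force. rewrite Hrest.
    split; auto_derive; try exact I; simpl; ring. }
  destruct (solves_unique force 56 force_lipschitz _ _ _ _ c Hsolves Hconst eq_refl Hc 0)
    as [Hq0 _].
  rewrite H0 in Hq0. rewrite <- Hq0, bump_in in Hrest by (simpl; lra). simpl in Hrest. lra. }
intros t Ht. destruct (Req_dec t 0) as [->|Ht0]; [lra|].
apply Rnot_le_lt. intros Hstop.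
destruct (continuity_pt_pos_near p 0) as [d [Hd Hnear]];
  [apply (solves_continuity_pt _ _ _ Hsolves) | lra |].
destruct (first_root p t) as [c [_ [Hc _]]];
  [intros; apply (solves_continuity_pt _ _ _ Hsolves) | lra | exact Hstop | |].
- exists d. split; [exact Hd|]. intros s Hs. apply Hnear. rewrite Rminus_0_r, Rabs_right; lra.
- exact (Hmoving c Hc).
Qed.

Lemma lt_above_separatrix (q p qt pt : R -> R) (po pto : R) :
  is_global_solution q p po -> is_global_solution qt pt pto ->
  0 < po < pto -> 2 <= pto ^ 2 -> forall t, 0 < t -> q t < qt t.
Proof.
intros Hsol Hsolt Hp Hpt t Ht.
pose proof Hsol as [H0 [Hp0 _]]. pose proof Hsolt as [Ht0 [Hpt0 _]].
apply (faster_stays_ahead g force is_derive_g q p qt pt t);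
  [exact (global_solution_solves _ _ _ Hsol) | exact (global_solution_solves _ _ _ Hsolt)
  | congruence | rewrite Hp0, Hpt0, Rabs_right; lra | | lra].
intros s Hs. left. apply (velocity_pos_above_separatrix qt pt pto Hsolt); lra.
Qed.

(** * Motion below the separatrix *)

Definition first_turn (p : R -> R) (Q : R) : Prop :=
  0 < Q /\ p Q = 0 /\ forall s, 0 <= s < Q -> 0 < p s.

Lemma velocity_vanishes_below_separatrix (q p : R -> R) (po : R) :
  is_global_solution q p po -> 0 < po -> po ^ 2 < 2 -> exists t, 0 < t /\ p t <= 0.
Proof.
intros Hsol Hpo Hpo2. pose proof Hsol as [H0 [Hp0 _]].
assert (Hsolves := global_solution_solves _ _ _ Hsol).
apply NNPP. intros Hnever.
assert (Hpos : forall t, 0 <= t -> 0 < p t).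
{ intros t Ht. destruct (Req_dec t 0) as [->|Ht0]; [lra|].
  apply Rnot_le_lt. intros Hle. apply Hnever. exists t. split; lra. }
assert (Hq1 : 0 < q 1).
{ rewrite <- H0. apply (lt_of_derive_pos q p); [lra | apply Hsolves | |];
    intros x Hx; [left|]; apply Hpos; lra. }
(* Below the separatrix [bump (q s) ^ 4 >= 1 - po^2/2], so the restoring force
   stays above the constant [m0] once [q] has passed [q 1]. *)
set (m0 := 8 * q 1 * (1 - po ^ 2 / 2)).
assert (Hforce : forall s, 1 <= s -> m0 <= force (q s)).
{ intros s Hs.
  assert (Hqs : q 1 <= q s).
  { apply (le_of_derive_nonneg q p); [lra | apply Hsolves |]. intros; left; apply Hpos; lra. }
  pose proof (global_solution_energy _ _ _ Hsol s) as E. rewrite g_bump in E.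
  destruct (bump_bounds (q s)).
  assert (Hb4 : 1 - po ^ 2 / 2 <= bump (q s) ^ 4) by (pose proof (pow2_ge_0 (p s)); lra).
  assert (bump (q s) ^ 4 <= bump (q s) ^ 3).
  { simpl. assert (0 <= bump (q s) * (bump (q s) * bump (q s))) by (repeat apply Rmult_le_pos; lra).
    nra. }
  unfold m0, force. rewrite !Rmult_assoc. apply Rmult_le_compat_l; [lra|].
  apply Rmult_le_compat; lra. }
assert (Hm0 : 0 < m0) by (unfold m0; repeat apply Rmult_lt_0_compat; lra).
assert (Hp1 : p 1 <= po).
{ pose proof (global_solution_energy _ _ _ Hsol 1). pose proof (g_nonneg (q 1)).
  apply (pow_le_inv_nonneg _ _ 2); [lra | lia | lra]. }
set (T := 1 + 2 * po / m0).
assert (HT : 1 <= T) by (unfold T; assert (0 < 2 * po / m0) by (apply Rdiv_lt_0_compat; lra); lra).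
assert (HpT : - p 1 - m0 * 1 <= - p T - m0 * T).
{ apply (le_of_derive_nonneg (fun s => - p s - m0 * s) (fun s => force (q s) - m0) 1 T HT).
  - intros s. replace (force (q s) - m0) with (- - force (q s) - m0 * 1) by ring.
    apply (is_derive_minus (fun s => - p s)); [apply (is_derive_opp p), Hsolves |].
    auto_derive; [exact I | ring].
  - intros s Hs. specialize (Hforce s ltac:(lra)). lra. }
assert (m0 * T = m0 + 2 * po) by (unfold T; field; lra).
specialize (Hpos T ltac:(lra)). lra.
Qed.

Lemma exists_first_turn (q p : R -> R) (po : R) :
  is_global_solution q p po -> 0 < po -> po ^ 2 < 2 -> exists Q, first_turn p Q.
Proof.
intros Hsol Hpo Hpo2. pose proof Hsol as [_ [Hp0 _]].
assert (Hcont := solves_continuity_pt _ _ _ (global_solution_solves _ _ _ Hsol)).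
destruct (velocity_vanishes_below_separatrix q p po Hsol Hpo Hpo2) as [t [Ht Hpt]].
destruct (continuity_pt_pos_near p 0) as [d [Hd Hnear]]; [apply Hcont | lra |].
destruct (first_root p t) as [Q [HQ [HpQ Hbelow]]]; [intros; apply Hcont | lra | exact Hpt | |].
- exists d. split; [exact Hd|]. intros s Hs. apply Hnear. rewrite Rminus_0_r, Rabs_right; lra.
- exists Q. split; [lra|]. split; [exact HpQ|].
  intros s Hs. destruct (Req_dec s 0) as [->|Hs0]; [lra | apply Hbelow; lra].
Qed.

Lemma first_turn_nonneg (p : R -> R) (Q : R) :
  first_turn p Q -> forall s, 0 <= s <= Q -> 0 <= p s.
Proof.
intros [HQ [HpQ Hpos]] s Hs. destruct (Req_dec s Q) as [->|]; [lra|]. left. apply Hpos. lra.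
Qed.

Section FirstQuarter.

Context {q p : R -> R} {po Q : R}.
Hypotheses (Hsol : is_global_solution q p po) (Hpo2 : po ^ 2 < 2) (HQ : first_turn p Q).

Lemma first_turn_increasing (a b : R) : 0 <= a < b -> b <= Q -> q a < q b.
Proof.
intros Hab HbQ. apply (lt_of_derive_pos q p); [lra | apply (global_solution_solves _ _ _ Hsol) | |].
- intros x Hx. apply (first_turn_nonneg p Q HQ). lra.
- intros x Hx. destruct HQ as [_ [_ Hpos]]. apply Hpos. lra.
Qed.

Lemma amplitude_pos : 0 < q Q.
Proof.
pose proof Hsol as [H0 _]. destruct HQ as [HQ0 _].
rewrite <- H0. apply first_turn_increasing; lra.
Qed.

Lemma orbit_in_well (t : R) : q t ^ 2 < 1.
Proof.
apply bump_pos. pose proof (global_solution_energy _ _ _ Hsol t) as E. rewrite g_bump in E.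
destruct (bump_bounds (q t)). destruct (Req_dec (bump (q t)) 0) as [Hb|]; [|lra].
rewrite Hb in E. pose proof (pow2_ge_0 (p t)). simpl in E. lra.
Qed.

Lemma g_in_well (t : R) : g (q t) = 1 - (1 - q t ^ 2) ^ 4.
Proof. rewrite g_bump, bump_in; [reflexivity | left; apply orbit_in_well]. Qed.

Lemma amplitude_energy : (1 - q Q ^ 2) ^ 4 = 1 - po ^ 2 / 2.
Proof.
pose proof (global_solution_energy _ _ _ Hsol Q) as E. destruct HQ as [_ [HpQ _]].
rewrite g_in_well, HpQ in E. simpl in E |- *. lra.
Qed.

Lemma energy_in_well (t : R) : p t ^ 2 = 2 * ((1 - q t ^ 2) ^ 4 - (1 - q Q ^ 2) ^ 4).
Proof.
pose proof (global_solution_energy _ _ _ Hsol t) as E. rewrite g_in_well in E.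
rewrite amplitude_energy. lra.
Qed.

Lemma le_amplitude (t : R) : q t <= q Q.
Proof.
pose proof (energy_in_well t). pose proof (pow2_ge_0 (p t)).
pose proof (orbit_in_well t). pose proof (orbit_in_well Q). pose proof amplitude_pos.
assert (1 - q Q ^ 2 <= 1 - q t ^ 2) by (apply (pow_le_inv_nonneg _ _ 4); [lra | lia | lra]).
nra.
Qed.

End FirstQuarter.

Lemma quartic_drop_cofactor_pos (a b V : R) :
  0 < a -> a < b -> b < 1 -> 0 <= V -> V < 1 ->
  0 < 6 * (1 + V) - 4 * (a + b) * (1 + V + V ^ 2)
      + (a ^ 2 + a * b + b ^ 2) * (1 + V + V ^ 2 + V ^ 3).
Proof.
intros Ha Hab Hb HV0 HV1.
set (S2 := 1 + V + V ^ 2). set (S3 := 1 + V + V ^ 2 + V ^ 3). set (x := (a + b) / 2).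
assert (HS3 : 0 < S3) by (unfold S3; nra).
assert (Hsq : 3 * x ^ 2 <= a ^ 2 + a * b + b ^ 2) by (unfold x; nra).
assert (Hx : 0 < x < 1) by (unfold x; lra).
assert (H23 : 0 < 8 * S2 - 6 * S3).
{ unfold S2, S3. assert (V ^ 3 <= V ^ 2) by nra. assert (V ^ 2 <= V) by nra. nra. }
assert (Hsplit : 6 * (1 + V) - 8 * x * S2 + 3 * x ^ 2 * S3
                 = (1 - V) ^ 2 * (1 + 3 * V) + (1 - x) * (8 * S2 - 3 * (1 + x) * S3))
  by (unfold S2, S3; ring).
assert (0 <= (1 - V) ^ 2 * (1 + 3 * V)) by (apply Rmult_le_pos; [apply pow2_ge_0 | lra]).
assert (0 < (1 - x) * (8 * S2 - 3 * (1 + x) * S3)) by (apply Rmult_lt_0_compat; nra).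
assert (3 * x ^ 2 * S3 <= (a ^ 2 + a * b + b ^ 2) * S3) by (apply Rmult_le_compat_r; lra).
replace (a + b) with (2 * x) by (unfold x; field).
fold S2. replace (S2 + V ^ 3) with S3 by reflexivity. lra.
Qed.

(* [a * b * (1 - V) * (b - a)] times the cofactor above is the difference of the two sides. *)
Lemma quartic_drop_ratio_lt (a b V : R) :
  0 < a -> a < b -> b < 1 -> 0 <= V -> V < 1 ->
  a * ((1 - b * V) ^ 4 - (1 - b) ^ 4) < b * ((1 - a * V) ^ 4 - (1 - a) ^ 4).
Proof.
intros Ha Hab Hb HV0 HV1.
assert (Hc := quartic_drop_cofactor_pos a b V Ha Hab Hb HV0 HV1).
set (C := 6 * (1 + V) - 4 * (a + b) * (1 + V + V ^ 2)
          + (a ^ 2 + a * b + b ^ 2) * (1 + V + V ^ 2 + V ^ 3)) in Hc.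
assert (0 < a * b * (1 - V) * (b - a) * C) by (repeat apply Rmult_lt_0_compat; lra).
assert (b * ((1 - a * V) ^ 4 - (1 - a) ^ 4) - a * ((1 - b * V) ^ 4 - (1 - b) ^ 4)
        = a * b * (1 - V) * (b - a) * C) by (unfold C; ring).
lra.
Qed.

Lemma scaled_speed_lt (A At v vt w : R) :
  0 < A -> A < At -> At ^ 2 < 1 -> 0 <= w < 1 -> 0 <= v ->
  v ^ 2 = 2 * ((1 - (A * w) ^ 2) ^ 4 - (1 - A ^ 2) ^ 4) ->
  vt ^ 2 = 2 * ((1 - (At * w) ^ 2) ^ 4 - (1 - At ^ 2) ^ 4) ->
  / At * vt < / A * v.
Proof.
intros HA HAt HAt1 Hw Hv E Et.
assert (Hratio := quartic_drop_ratio_lt (A ^ 2) (At ^ 2) (w ^ 2)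
                    ltac:(nra) ltac:(nra) HAt1 ltac:(nra) ltac:(nra)).
replace ((A * w) ^ 2) with (A ^ 2 * w ^ 2) in E by ring.
replace ((At * w) ^ 2) with (At ^ 2 * w ^ 2) in Et by ring.
assert (Hsq : (A * vt) ^ 2 < (At * v) ^ 2).
{ replace ((A * vt) ^ 2) with (A ^ 2 * vt ^ 2) by ring.
  replace ((At * v) ^ 2) with (At ^ 2 * v ^ 2) by ring.
  rewrite E, Et. lra. }
assert (A * vt < At * v) by (apply (pow_lt_inv_nonneg _ _ 2); [apply Rmult_le_pos |]; lra).
apply (Rmult_lt_reg_l (A * At)); [nra|].
replace (A * At * (/ At * vt)) with (A * vt) by (field; lra).
replace (A * At * (/ A * v)) with (At * v) by (field; lra). lra.
Qed.

Lemma force_div_lt (A At : R) : 0 < A < At -> At ^ 2 < 1 -> / At * force At < / A * force A.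
Proof.
intros HA HAt. unfold force. rewrite !bump_in by nra.
replace (/ At * (8 * At * (1 - At ^ 2) ^ 3)) with (8 * (1 - At ^ 2) ^ 3) by (field; lra).
replace (/ A * (8 * A * (1 - A ^ 2) ^ 3)) with (8 * (1 - A ^ 2) ^ 3) by (field; lra).
assert ((1 - At ^ 2) ^ 3 < (1 - A ^ 2) ^ 3) by (apply pow_lt_compat_nonneg; [split; nra | lia]).
lra.
Qed.

Section TwoSolutionsBelowSeparatrix.

Context {q p qt pt : R -> R} {po pto Q Qt : R}.
Hypotheses (Hsol : is_global_solution q p po) (Hsolt : is_global_solution qt pt pto)
  (Hpo : 0 < po) (Hpto : po < pto) (Hpto2 : pto ^ 2 < 2)
  (HQ : first_turn p Q) (HQt : first_turn pt Qt).

Let po2_lt_2 : po ^ 2 < 2.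
Proof. nra. Qed.

Lemma amplitude_lt : q Q < qt Qt.
Proof.
pose proof (amplitude_energy Hsol po2_lt_2 HQ). pose proof (amplitude_energy Hsolt Hpto2 HQt).
pose proof (orbit_in_well Hsol po2_lt_2 Q). pose proof (amplitude_pos Hsol HQ).
pose proof (amplitude_pos Hsolt HQt).
assert (1 - qt Qt ^ 2 < 1 - q Q ^ 2) by (apply (pow_lt_inv_nonneg _ _ 4); nra).
nra.
Qed.

Lemma scaled_velocity_lt_at_crossing (c : R) :
  0 <= c <= Q -> q c < q Q -> / q Q * q c = / qt Qt * qt c -> / qt Qt * pt c < / q Q * p c.
Proof.
intros Hc Hqc Hcross.
pose proof (amplitude_pos Hsol HQ) as HA. pose proof amplitude_lt as HAAt.
set (w := / q Q * q c).
assert (Hqw : q c = q Q * w) by (unfold w; field; lra).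
assert (Hqtw : qt c = qt Qt * w) by (unfold w; rewrite Hcross; field; lra).
assert (Hq0 : 0 <= q c).
{ pose proof Hsol as [H0 _]. destruct (Req_dec c 0) as [->|Hc0]; [lra|].
  rewrite <- H0. left. apply (first_turn_increasing Hsol HQ); lra. }
apply (scaled_speed_lt (q Q) (qt Qt) (p c) (pt c) w HA HAAt).
- apply (orbit_in_well Hsolt Hpto2).
- unfold w. split; [apply Rmult_le_pos; [left; apply Rinv_0_lt_compat |]; lra|].
  apply (Rmult_lt_reg_l (q Q)); [lra|]. field_simplify; lra.
- apply (first_turn_nonneg p Q HQ). lra.
- rewrite <- Hqw. apply (energy_in_well Hsol po2_lt_2 HQ).
- rewrite <- Hqtw. apply (energy_in_well Hsolt Hpto2 HQt).
Qed.

Lemma first_turn_lt : Q < Qt.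
Proof.
destruct (Rlt_le_dec Q Qt) as [|HQQ]; [assumption|]. exfalso.
pose proof Hsol as [H0 _]. pose proof Hsolt as [Ht0 _].
pose proof HQ as [HQ0 [HpQ _]]. pose proof HQt as [HQt0 [HptQt _]].
assert (Hsolves := global_solution_solves _ _ _ Hsol).
assert (Hsolvest := global_solution_solves _ _ _ Hsolt).
pose proof (amplitude_pos Hsol HQ) as HA. pose proof amplitude_lt as HAAt.
set (D := fun s => / q Q * q s - / qt Qt * qt s).
set (D' := fun s => / q Q * p s - / qt Qt * pt s).
assert (HD : forall s, is_derive D s (D' s)).
{ intros s. apply (is_derive_minus (fun s => / q Q * q s));
    apply is_derive_scal; [apply Hsolves | apply Hsolvest]. }
assert (Hcross : forall c, 0 <= c <= Q -> q c < q Q -> D c = 0 -> 0 < D' c).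
{ intros c Hc Hqc HDc. unfold D, D' in *.
  pose proof (scaled_velocity_lt_at_crossing c Hc Hqc ltac:(lra)). lra. }
destruct (first_root D Qt) as [c [Hc [HDc Hbelow]]].
- intros x. apply (is_derive_continuity_pt _ _ _ (HD x)).
- exact HQt0.
- unfold D. rewrite Rinv_l by lra.
  pose proof (le_amplitude Hsol po2_lt_2 HQ Qt).
  assert (/ q Q * q Qt <= / q Q * q Q)
    by (apply Rmult_le_compat_l; [left; apply Rinv_0_lt_compat |]; lra).
  rewrite Rinv_l in * by lra. lra.
- assert (HD0 : D 0 = 0) by (unfold D; rewrite H0, Ht0; ring).
  assert (HD'0 : 0 < D' 0) by (apply Hcross; lra).
  destruct (derive_sign_near D 0 _ (HD 0) ltac:(lra)) as [d [Hd Hsign]].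
  exists d. split; [exact Hd|]. intros s Hs.
  specialize (Hsign s ltac:(lra) ltac:(rewrite Rabs_right; lra)).
  rewrite HD0, !Rminus_0_r in Hsign.
  assert (0 < D' 0 * s) by (apply Rmult_lt_0_compat; lra). nra.
- assert (HD'c := derive_nonpos_at_first_root D c _ (HD c) ltac:(lra) HDc Hbelow).
  destruct (Rlt_le_dec (q c) (q Q)) as [Hqc|Hqc].
  + pose proof (Hcross c ltac:(lra) Hqc HDc). lra.
  + (* Both motions turn at the same instant, where [D] has a degenerate root. *)
    assert (HcQ : c = Q).
    { destruct (Rlt_le_dec c Q) as [HcQ|]; [|lra].
      pose proof (first_turn_increasing Hsol HQ c Q ltac:(lra) ltac:(lra)). lra. }
    assert (HQQt : Qt = Q) by lra.
    subst c.
    assert (HD'Q : D' Q = 0) by (unfold D'; rewrite HpQ, <- HQQt, HptQt; ring).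
    assert (HD'' : is_derive D' Q (/ q Q * - force (q Q) - / qt Qt * - force (qt Q))).
    { apply (is_derive_minus (fun s => / q Q * p s)); apply is_derive_scal;
        [apply Hsolves | apply Hsolvest]. }
    pose proof (derive2_nonneg_at_first_root D D' Q _ HD HD'' HQ0 HDc HD'Q Hbelow) as Hconvex.
    pose proof (force_div_lt (q Q) (qt Qt) ltac:(lra) (orbit_in_well Hsolt Hpto2 Qt)) as Hforce.
    rewrite HQQt in Hforce, Hconvex. lra.
Qed.

Lemma lt_until_double_turn (t : R) : 0 < t <= 2 * Q -> q t < qt t.
Proof.
intros Ht. pose proof first_turn_lt as HQQt.
pose proof Hsol as [H0 [Hp0 _]]. pose proof Hsolt as [Ht0 [Hpt0 _]].
pose proof HQ as [_ [HpQ _]]. pose proof HQt as [_ [HptQt _]].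
assert (Hsolves := global_solution_solves _ _ _ Hsol).
assert (Hsolvest := global_solution_solves _ _ _ Hsolt).
assert (Hahead : forall s, 0 < s <= Qt -> q s < qt s).
{ apply (faster_stays_ahead g force is_derive_g q p qt pt Qt Hsolves Hsolvest);
    [congruence | rewrite Hp0, Hpt0, Rabs_right; lra | apply (first_turn_nonneg pt Qt HQt)]. }
destruct (Rle_lt_dec t Qt) as [|Hlate]; [apply Hahead; lra|].
rewrite <- (solution_reflection force 56 force_lipschitz q p Q Hsolves HpQ t).
rewrite <- (solution_reflection force 56 force_lipschitz qt pt Qt Hsolvest HptQt t).
assert (q (2 * Q - t) <= qt (2 * Q - t)).
{ destruct (Req_dec t (2 * Q)) as [->|Ht2].
  - replace (2 * Q - 2 * Q) with 0 by ring. lra.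
  - left. apply Hahead. lra. }
assert (qt (2 * Q - t) < qt (2 * Qt - t)) by (apply (first_turn_increasing Hsolt HQt); lra).
lra.
Qed.

End TwoSolutionsBelowSeparatrix.

Lemma min_period_le (f : R -> R) (P : R) :
  0 < P -> (forall t, f (t + P) = f t) -> min_period f <= P.
Proof.
intros HP Hper. unfold min_period.
destruct (Glb_Rbar_correct (fun T => 0 < T /\ forall t, f (t + T) = f t)) as [Hlb Hglb].
assert (Hle : Rbar_le (Glb_Rbar (fun T => 0 < T /\ forall t, f (t + T) = f t)) P)
  by (apply Hlb; split; assumption).
assert (Hge : Rbar_le 0 (Glb_Rbar (fun T => 0 < T /\ forall t, f (t + T) = f t)))
  by (apply Hglb; intros x [Hx _]; simpl; lra).
destruct (Glb_Rbar (fun T => 0 < T /\ forall t, f (t + T) = f t)); simpl in *; tauto.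
Qed.

Theorem lemma5p15 (po pto : R) (q p qt pt : R -> R) :
  0 < po -> po < pto -> pto < 2 ->
  is_global_solution q p po ->
  is_global_solution qt pt pto ->
  ((0 < po < sqrt 2) ->
     forall t : R, 0 < t <= min_period q / 2 -> q t < qt t) /\
  ((sqrt 2 <= po < 2) ->
     forall t : R, 0 < t -> q t < qt t).
Proof.
intros Hpo Hpto _ Hsol Hsolt.
assert (Hsqrt2 : sqrt 2 ^ 2 = 2) by (apply pow2_sqrt; lra).
split.
- intros [_ Hpo_sqrt2] t Ht.
  assert (Hpo2 : po ^ 2 < 2) by (rewrite <- Hsqrt2; apply pow_lt_compat_nonneg; [lra | lia]).
  destruct (Rlt_le_dec (pto ^ 2) 2) as [Hpto2|Hpto2].
  + destruct (exists_first_turn q p po Hsol Hpo Hpo2) as [Q HQ].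
    destruct (exists_first_turn qt pt pto Hsolt ltac:(lra) Hpto2) as [Qt HQt].
    apply (lt_until_double_turn Hsol Hsolt Hpo Hpto Hpto2 HQ HQt).
    pose proof HQ as [HQ0 [HpQ _]]. pose proof Hsol as [H0 _].
    pose proof (min_period_le q (4 * Q) ltac:(lra) (solution_periodic force 56 force_lipschitz
                  force_odd q p Q (global_solution_solves _ _ _ Hsol) H0 HpQ)).
    lra.
  + apply (lt_above_separatrix q p qt pt po pto Hsol Hsolt); lra.
- intros [Hpo_sqrt2 _] t Ht.
  apply (lt_above_separatrix q p qt pt po pto Hsol Hsolt); [lra | | lra].
  rewrite <- Hsqrt2. apply pow_incr. split; [apply sqrt_pos | lra].
Qed.
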